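(* For every $0<\delta\le1$ and $0<\epsilon\le1$ there exist $n$, $m$, a preference profile $\sigma$, and two distributions $\mathcal{D}_1,\mathcal{D}_2$ supported on $[0,1]$ with total variation distance at most $\epsilon$ such that every alternative $j$ maximizing $\mathbb{E}_{\mathcal{D}_1}[\mathrm{sw}(j,u)]$ at $\sigma$ satisfies $\mathbb{E}_{\mathcal{D}_2}[\mathrm{sw}(j,u)]<\delta\max_{k\in A}\mathbb{E}_{\mathcal{D}_2}[\mathrm{sw}(k,u)]$; i.e., the expected-welfare-maximizing rule for $\mathcal{D}_1$ is not a $\delta$-expected-welfare-maximizing rule for $\mathcal{D}_2$.
   Context: There are $n$ voters and $m$ alternatives $A=\{1,\dots,m\}$. A preference profile $\sigma$ consists of a ranking of $A$ for each voter. Given a distribution $\mathcal{D}$ and profile $\sigma$, a random utility profile $u$ consistent with $\sigma$ is generated as follows: independently for each voter $i$, draw $m$ i.i.d. samples from $\mathcal{D}$ and assign them, from highest to lowest, to the alternatives in the order of voter $i$'s ranking. The social welfare of $j$ is $\mathrm{sw}(j,u)=\sum_i u_{ij}$; $\mathbb{E}_{\mathcal{D}}$ is expectation over $u$ generated with $\mathcal{D}$. *)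

From HB Require Import structures.
From mathcomp Require Import all_boot all_order all_algebra perm.
From mathcomp Require Import all_classical all_reals all_analysis.
Set Implicit Arguments. Unset Strict Implicit. Unset Printing Implicit Defensive.
Import Order.TTheory GRing.Theory Num.Theory.
Local Open Scope classical_set_scope.
Local Open Scope ring_scope.
Local Open Scope ereal_scope.

Section Defs.
Variable R : realType.

Definition supported01 (P : probability R R) : Prop := P [set x : R | (0 <= x <= 1)%R] = 1.

Definition tv_dist (P Q : probability R R) : \bar R :=
  ereal_sup [set `|P A - Q A| | A in [set A : set R | measurable A]].

(* Expectation of f(X_1,...,X_N) where X_1,...,X_N are i.i.d. with law P,
   written as the iterated integral (first coordinate outermost). *)
Fixpoint iid_expect (P : probability R R) (N : nat) (f : seq R -> \bar R)
  : \bar R :=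
  match N with
  | 0 => f [::]
  | N'.+1 => \int[P]_x iid_expect P N' (fun s => f (x :: s))
  end.

(* A preference profile: voter i's ranking sigma i maps a position k
   (k = 0 is the top) to the alternative ranked k-th. *)
Definition profile (n m : nat) := 'I_n -> {perm 'I_m}.

(* Utility of voter i for alternative j, given the sequence s of n*m draws:
   voter i uses draws i*m, ..., i*m+m-1, sorted from highest to lowest and
   assigned along the ranking sigma i. *)
Definition utility (n m : nat) (sigma : profile n m) (s : seq R)
  (i : 'I_n) (j : 'I_m) : R :=
  nth 0%R (sort (fun x y : R => (y <= x)%R) (take m (drop (i * m) s)))
      ((sigma i)^-1%g j).

Definition sw (n m : nat) (sigma : profile n m) (s : seq R) (j : 'I_m) : R :=
  (\sum_(i < n) utility sigma s i j)%R.

Definition exp_sw (P : probability R R) (n m : nat) (sigma : profile n m)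
  (j : 'I_m) : \bar R :=
  iid_expect P (n * m) (fun s => (sw sigma s j)%:E).

End Defs.

(* Take D1 = Bernoulli(q) and D2 = Bernoulli(p) on {0,1}, with q = eps/4 and p
   tiny, so that |q - p| <= eps, and n + 2 alternatives ranked by n + 1 voters:
   every voter puts alternative 0 second, while the other alternatives are
   cyclically shifted through the remaining positions.  For draws in {0,1} the
   utility at position r is 1 iff more than r of the n + 2 draws are 1, so with
   T = P(at least two draws are 1) alternative 0 has expected welfare (n+1) T
   and every other one (n+2) q - T.  If (n+2) q is large then T >= 1/2 > q and
   alternative 0 is the only D1-maximizer; if p is tiny then T <= ((n+2) p)^2 is
   negligible against (n+2) p, and alternative 0 loses to the others by more
   than any factor delta under D2. *)

From HB Require Import structures.
From mathcomp Require Import all_boot all_order all_algebra perm.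
From mathcomp Require Import all_classical all_reals all_analysis.
From mathcomp Require Import measurable_realfun ring lra.
Set Implicit Arguments. Unset Strict Implicit. Unset Printing Implicit Defensive.
Import Order.TTheory GRing.Theory Num.Theory.
Local Open Scope ring_scope.

Local Notation ones s := (count_mem 1%R s).

Section sort_bool_seq.
Variable R : realDomainType.
Implicit Type s : seq R.

Definition bool_seq s := all [pred x | (x == 0) || (x == 1)] s.

Local Notation ger := (fun x y : R => y <= x).

Let ger_trans : transitive ger.
Proof. by move=> x y z yx zy; apply: le_trans yx. Qed.

Let sorted_ones_zeros (a b : nat) : sorted ger (nseq a 1 ++ nseq b 0).
Proof.
elim: a => [|a IH] /=.
  by elim: b => //= b IH; rewrite path_sortedE // all_nseq lexx orbT IH.
by rewrite path_sortedE // IH all_cat !all_nseq lexx ler01 !orbT.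
Qed.

Let perm_ones_zeros s : bool_seq s ->
  perm_eq s (nseq (ones s) 1 ++ nseq (count_mem 0 s) 0).
Proof.
elim: s => [|x s IH] //= /andP[/orP[]/eqP-> /IH{}IH].
  rewrite eqxx eq_sym oner_eq0 /= -[0 :: nseq _ _]cat1s perm_sym perm_catCA /= perm_cons.
  by rewrite perm_sym.
by rewrite eqxx oner_eq0 /= perm_cons.
Qed.

Lemma sort_bool_seq s : bool_seq s ->
  sort ger s = nseq (ones s) 1 ++ nseq (count_mem 0 s) 0.
Proof.
move=> s01; apply: (sorted_eq ger_trans).
- by move=> x y /andP[xy yx]; apply/eqP; rewrite eq_le xy yx.
- by apply: sort_sorted => x y; exact: le_total.
- exact: sorted_ones_zeros.
by rewrite perm_sort perm_ones_zeros.
Qed.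

Lemma nth_sort_bool_seq s r : bool_seq s ->
  nth 0 (sort ger s) r = (r < ones s)%N%:R.
Proof.
move=> s01; rewrite sort_bool_seq // nth_cat size_nseq.
by case: ltnP => lt_r; rewrite nth_nseq ?lt_r //; case: ifP.
Qed.

End sort_bool_seq.

Section bern_expect.
Variables (R : realDomainType) (q : R).
Implicit Types (h : seq R -> R) (s : seq R).

Fixpoint bern_expect N h : R :=
  if N is N'.+1 then
    (1 - q) * bern_expect N' (fun s => h (0 :: s)) +
    q * bern_expect N' (fun s => h (1 :: s))
  else h [::].

Let ones_cons0 s : ones (0 :: s) = ones s.
Proof. by rewrite /= eq_sym oner_eq0. Qed.

Let ones_cons1 s : ones (1 :: s) = (ones s).+1.
Proof. by rewrite /= eqxx. Qed.

Lemma bern_expectS N h : bern_expect N.+1 h =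
  (1 - q) * bern_expect N (fun s => h (0 :: s)) + q * bern_expect N (fun s => h (1 :: s)).
Proof. by []. Qed.

Lemma eq_bern_expect N h h' :
  (forall s, size s = N -> bool_seq s -> h s = h' s) ->
  bern_expect N h = bern_expect N h'.
Proof.
elim: N h h' => [|N IH] h h' hh' /=; first exact: hh'.
congr (_ * _ + _ * _); apply: IH => s sz s01; apply: hh' => /=; rewrite ?sz //.
  by rewrite /bool_seq /= eqxx.
by rewrite /bool_seq /= eqxx orbT.
Qed.

Lemma bern_expect_cst N c : bern_expect N (fun=> c) = c.
Proof. by elim: N => //= N ->; ring. Qed.

Lemma bern_expectD N h h' :
  bern_expect N (fun s => h s + h' s) = bern_expect N h + bern_expect N h'.
Proof. by elim: N h h' => //= N IH h h'; rewrite !IH; ring. Qed.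

Lemma bern_expect_sum N (I : finType) (F : I -> seq R -> R) :
  bern_expect N (fun s => \sum_i F i s) = \sum_i bern_expect N (F i).
Proof.
elim: N F => //= N IH F.
by rewrite (IH (fun i s => F i (0 :: s))) (IH (fun i s => F i (1 :: s))) !mulr_sumr -big_split.
Qed.

Lemma bern_expect_drop a N h :
  bern_expect (a + N) (fun s => h (drop a s)) = bern_expect N h.
Proof.
elim: a h => [|a IH] h; first by apply: eq_bern_expect => s _ _; rewrite drop0.
by rewrite addSn /= !IH; ring.
Qed.

Lemma bern_expect_take N b h :
  bern_expect (N + b) (fun s => h (take N s)) = bern_expect N h.
Proof.
elim: N h => [|N IH] h /=.
  by rewrite -[RHS](bern_expect_cst b); apply: eq_bern_expect => s _ _; rewrite take0.
by rewrite (IH (fun t => h (0 :: t))) (IH (fun t => h (1 :: t))).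
Qed.

Lemma bern_expect_block n m i h : (i < n)%N ->
  bern_expect (n * m) (fun s => h (take m (drop (i * m) s))) = bern_expect m h.
Proof.
move=> lt_in; have -> : (n * m = i * m + (m + (n - i.+1) * m))%N.
  by rewrite addnA -mulSnr -mulnDl subnKC.
by rewrite (bern_expect_drop _ _ (fun t => h (take m t))) bern_expect_take.
Qed.

Lemma bern_expect_count N : bern_expect N (fun s => (ones s)%:R) = N%:R * q.
Proof.
elim: N => [|N IH]; first by rewrite mul0r.
rewrite bern_expectS; under eq_bern_expect => s _ _ do rewrite ones_cons0.
under [X in q * X]eq_bern_expect => s _ _ do rewrite ones_cons1 mulrS.
by rewrite bern_expectD bern_expect_cst IH mulrS; ring.
Qed.

Lemma bern_expect_count_eq0 N :
  bern_expect N (fun s => (ones s == 0)%N%:R) = (1 - q) ^+ N.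
Proof.
elim: N => [|N IH] //; rewrite bern_expectS.
under eq_bern_expect => s _ _ do rewrite ones_cons0.
under [X in q * X]eq_bern_expect => s _ _ do rewrite ones_cons1.
by rewrite bern_expect_cst IH exprS mulr0 addr0.
Qed.

Lemma bern_expect_count_le1 N :
  bern_expect N.+1 (fun s => (ones s <= 1)%N%:R) = (1 - q) ^+ N * (1 + N%:R * q).
Proof.
elim: N => [|N IH]; first by rewrite /= eqxx eq_sym oner_eq0 /=; ring.
rewrite bern_expectS; under eq_bern_expect => s _ _ do rewrite ones_cons0.
under [X in q * X]eq_bern_expect => s _ _ do rewrite ones_cons1 ltnS leqn0.
by rewrite IH bern_expect_count_eq0 exprS mulrS; ring.
Qed.

Hypothesis q01 : 0 <= q <= 1.

Lemma ler_bern_expect N h h' : (forall s, h s <= h' s) ->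
  bern_expect N h <= bern_expect N h'.
Proof.
have [q0 q1] := andP q01; have q1' : 0 <= 1 - q by rewrite subr_ge0.
elim: N h h' => [|N IH] h h' hh' //=.
by rewrite lerD // ler_wpM2l // IH.
Qed.

Lemma bern_expect_ge0 N h : (forall s, 0 <= h s) -> 0 <= bern_expect N h.
Proof. by move=> h0; rewrite -(bern_expect_cst N 0); apply: ler_bern_expect. Qed.

Lemma bern_expect_count_gt0 N :
  bern_expect N (fun s => (0 < ones s)%N%:R) <= N%:R * q.
Proof.
rewrite -bern_expect_count; apply: ler_bern_expect => s.
by rewrite ler_nat; case: (ones s).
Qed.

Lemma bern_expect_count_gt1 N :
  bern_expect N (fun s => (1 < ones s)%N%:R) <= (N%:R * q) ^+ 2.
Proof.
have [q0 q1] := andP q01.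
elim: N => [|N IH]; first by rewrite /= mul0r expr0n.
rewrite bern_expectS; under eq_bern_expect => s _ _ do rewrite ones_cons0.
under [X in q * X]eq_bern_expect => s _ _ do rewrite ones_cons1 ltnS.
have := bern_expect_ge0 N (fun s => ler0n _ (1 < ones s)%N).
have := bern_expect_count_gt0 N.
move: IH; set T := bern_expect _ _; set U := bern_expect _ _ => TN UN T0.
have qT0 := mulr_ge0 q0 T0; have qUN := ler_wpM2l q0 UN.
have qqN0 := mulr_ge0 q0 (mulr_ge0 q0 (ler0n R N)).
by rewrite mulrS; nra.
Qed.

Lemma expr1B_mul_le1 j : (1 - q) ^+ j * (1 + j%:R * q) <= 1.
Proof.
have [q0 q1] := andP q01.
elim: j => [|j IH]; first by rewrite mul0r addr0 mulr1.
have z0 : 0 <= (1 - q) ^+ j by apply: exprn_ge0; rewrite subr_ge0.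
have j0 : 0 <= j%:R :> R := ler0n _ j.
have zqj0 : 0 <= (1 - q) ^+ j * (q ^+ 2 * (1 + j%:R)).
  by rewrite mulr_ge0 // mulr_ge0 ?sqr_ge0 // addr_ge0.
rewrite exprSr mulrS; nra.
Qed.

Lemma bern_expect_count_gt1_ge j : 3 <= j%:R * q ->
  1 <= 2 * bern_expect j.*2.+1 (fun s => (1 < ones s)%N%:R).
Proof.
move=> jq3.
have -> : bern_expect j.*2.+1 (fun s => (1 < ones s)%N%:R) =
    1 - bern_expect j.*2.+1 (fun s => (ones s <= 1)%N%:R).
  apply/eqP; rewrite eq_sym subr_eq -bern_expectD -{1}(bern_expect_cst j.*2.+1 1).
  apply/eqP/eq_bern_expect => s _ _.
  by rewrite ltnNge; case: (ones s <= 1)%N; rewrite ?add0r ?addr0.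
(* With z = (1 - q)^j and y = j q: z (1 + y) <= 1, so the probability of at
   most one success is z^2 (1 + 2y) <= (1 + 2y) / (1 + y)^2 <= 1/2 as y >= 3. *)
rewrite bern_expect_count_le1 -addnn exprD natrD [(_ + _) * q]mulrDl.
have z0 : 0 <= (1 - q) ^+ j by rewrite exprn_ge0 // subr_ge0; case/andP: q01.
move: z0 (expr1B_mul_le1 j) jq3; set z := (1 - q) ^+ j; set y := j%:R * q.
move=> z0 zy y3.
have zy2 : (z * (1 + y)) ^+ 2 <= 1.
  by rewrite expr_le1 // mulr_ge0 // addr_ge0 // (le_trans _ y3).
have zy3 : 0 <= z ^+ 2 * ((1 + y) ^+ 2 - 2 * (1 + 2 * y)) by rewrite mulr_ge0 ?sqr_ge0 //; nra.
nra.
Qed.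

End bern_expect.

(* No measurability is assumed: the integrands built by [iid_expect] are
   arbitrary functions of the outer draw. *)
Lemma ge0_le_integralT d (T : measurableType d) (R : realType)
    (mu : {measure set T -> \bar R}) (f g : T -> \bar R) :
  (forall x, 0 <= g x)%E -> (forall x, g x <= f x)%E ->
  (\int[mu]_x g x <= \int[mu]_x f x)%E.
Proof.
move=> g0 gf; have f0 x : (0 <= f x)%E := le_trans (g0 x) (gf x).
rewrite !ge0_integralTE //; apply: ereal_sup_le => _ [h hg <-].
by exists h => // x; exact: le_trans (hg x) (gf x).
Qed.

Section bernoulli01.
Import HBNNSimple.
Local Open Scope classical_set_scope.
Local Open Scope ereal_scope.
Variables (R : realType) (q : R).
Hypothesis q01 : (0 <= q <= 1)%R.

Let q_nng : {nonneg R} := NngNum (proj1 (andP q01)).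
Let onemq_ge0 : (0 <= 1 - q)%R. Proof. by rewrite subr_ge0; case/andP: q01. Qed.
Let onemq_nng : {nonneg R} := NngNum onemq_ge0.

Definition bernoulli01_measure :=
  measure_add (mscale onemq_nng \d_(0%R : R)) (mscale q_nng \d_(1%R : R)).

Let bernoulli01_measureE A :
  bernoulli01_measure A = ((1 - q) * (0 \in A)%:R + q * (1 \in A)%:R)%R%:E.
Proof.
rewrite /bernoulli01_measure measure_addE.
change ((1 - q)%:E * (\1_A 0%R)%:E + q%:E * (\1_A 1%R)%:E =
  ((1 - q) * (0 \in A)%:R + q * (1 \in A)%:R)%R%:E).
by rewrite !indicE -!EFinM -EFinD.
Qed.

HB.instance Definition _ := Measure.copy bernoulli01_measure
  (measure_add (mscale onemq_nng \d_(0%R : R)) (mscale q_nng \d_(1%R : R))).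

Lemma bernoulli01_measure_setT : bernoulli01_measure setT = 1.
Proof. by rewrite bernoulli01_measureE !in_setT /= !mulr1 subrK. Qed.

HB.instance Definition _ :=
  Measure_isProbability.Build _ _ _ bernoulli01_measure bernoulli01_measure_setT.

Definition bernoulli01 : probability R R := bernoulli01_measure.

Lemma bernoulli01E A :
  bernoulli01 A = ((1 - q) * (0 \in A)%:R + q * (1 \in A)%:R)%R%:E.
Proof. exact: bernoulli01_measureE. Qed.

Lemma supported01_bernoulli01 : supported01 bernoulli01.
Proof.
rewrite /supported01 bernoulli01E !mem_set /= ?lexx ?ler01 //.
by rewrite !mulr1 subrK.
Qed.

Let integral_bernoulli01_measurable (g : R -> \bar R) :
  (forall x, 0 <= g x) -> measurable_fun setT g ->
  \int[bernoulli01]_x g x = (1 - q)%:E * g 0%R + q%:E * g 1%R.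
Proof.
move=> g0 mg; rewrite ge0_integral_measure_add //.
by rewrite !ge0_integral_mscale //= !integral_dirac // !diracE !in_setT !mul1e.
Qed.

Lemma ge0_integral_bernoulli01 (f : R -> R) : (forall x, 0 <= f x)%R ->
  \int[bernoulli01]_x (f x)%:E = ((1 - q) * f 0 + q * f 1)%R%:E.
Proof.
have [q0 q1] := andP q01; move=> f0; apply/eqP; rewrite eq_le; apply/andP; split.
  rewrite ge0_integralTE => [|x]; last by rewrite lee_fin.
  apply: ge_ereal_sup => _ [h hf <-].
  rewrite -integralT_nnsfun integral_bernoulli01_measurable => [|x|]; last 2 first.
  - by rewrite lee_fin fun_ge0.
  - by apply/measurable_EFinP; exact: measurable_funPT.
  rewrite -!EFinM -EFinD lee_fin.
  by apply: lerD; apply: ler_wpM2l => //; rewrite -lee_fin; exact: hf.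
pose g (x : R) := (f 0 * \1_[set 0%R] x + f 1 * \1_[set 1%R] x)%R%:E.
have g0 x : 0 <= g x by rewrite lee_fin addr_ge0 // mulr_ge0.
have gf x : g x <= (f x)%:E.
  rewrite lee_fin /g !indicE; have [->|x0] := eqVneq x 0%R.
    by rewrite !in_set1 eqxx eq_sym oner_eq0 /= mulr1 mulr0 addr0.
  have [->|x1] := eqVneq x 1%R; first by rewrite !in_set1 eqxx oner_eq0 /= mulr1 mulr0 add0r.
  by rewrite !in_set1 (negbTE x0) (negbTE x1) /= !mulr0 addr0.
apply: le_trans (ge0_le_integralT _ g0 gf).
rewrite integral_bernoulli01_measurable //; last first.
  apply/measurable_EFinP; apply: measurable_funD; apply: measurable_funM => //;
  exact: measurable_indic.
rewrite /g !indicE !in_set1 !eqxx oner_eq0 eq_sym oner_eq0 /=.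
by rewrite !mulr1 !mulr0 addr0 add0r -!EFinM -EFinD.
Qed.

Lemma integral_bernoulli01 (F : R -> R) :
  \int[bernoulli01]_x (F x)%:E = ((1 - q) * F 0 + q * F 1)%R%:E.
Proof.
have pos : (EFin \o F)^\+ = fun x => (Num.max (F x) 0)%:E.
  by apply/funext => x; rewrite funeposE EFin_max.
have neg : (EFin \o F)^\- = fun x => (Num.max (- F x) 0)%:E.
  by apply/funext => x; rewrite funenegE -EFinN EFin_max.
have maxB (y : R) : (Num.max y 0 - Num.max (- y) 0)%R = y.
  case: (leP y 0%R) => y0; first by rewrite max_l ?sub0r ?opprK // oppr_ge0.
  by rewrite max_r ?subr0 // oppr_le0 ltW.
rewrite integralE pos neg !ge0_integral_bernoulli01 => [|x|x]; try by rewrite le_max lexx orbT.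
by rewrite -EFinB -[in RHS](maxB (F 0%R)) -[in RHS](maxB (F 1%R)); congr EFin; ring.
Qed.

End bernoulli01.

Arguments bernoulli01 {R q}.

Lemma iid_expect_bernoulli01 (R : realType) (q : R) (q01 : 0 <= q <= 1) N h :
  iid_expect (bernoulli01 q01) N (fun s => (h s)%:E) = (bern_expect q N h)%:E.
Proof.
elim: N h => [|N IH] h //=.
by under eq_integral => x _ do rewrite IH; rewrite integral_bernoulli01.
Qed.

Lemma tv_dist_bernoulli01 (R : realType) (q p : R)
    (q01 : 0 <= q <= 1) (p01 : 0 <= p <= 1) :
  (tv_dist (bernoulli01 q01) (bernoulli01 p01) <= `|q - p|%:E)%E.
Proof.
apply: ge_ereal_sup => _ [A _ <-]; rewrite !bernoulli01E -EFinB lee_fin.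
have -> : (1 - q) * (0 \in A)%:R + q * (1 \in A)%:R
    - ((1 - p) * (0 \in A)%:R + p * (1 \in A)%:R)
    = (q - p) * ((1 \in A)%:R - (0 \in A)%:R) by ring.
rewrite normrM ler_piMr //.
by case: (_ \in A); case: (_ \in A); rewrite ?subrr ?normr0 ?subr0 ?sub0r ?normrN ?normr1.
Qed.

(* The (r+1)-th largest of N draws in {0,1} is 1 iff more than r draws are 1. *)
Definition order_stat_mean (R : realDomainType) (q : R) N r :=
  bern_expect q N (fun s => (r < ones s)%N%:R).

Lemma sum_order_stat_mean (R : realDomainType) (q : R) N :
  \sum_(r < N) order_stat_mean q N r = N%:R * q.
Proof.
rewrite -bern_expect_sum -bern_expect_count; apply: eq_bern_expect => s sz _.
rewrite -natr_sum; congr _%:R.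
have ones_le : (ones s <= N)%N by rewrite -sz count_size.
by rewrite -big_mkcondr /= -(big_ord_widen _ (fun=> 1%N)) // sum1_card card_ord.
Qed.

Section rotation_profile.
Variable n : nat.

Definition second : 'I_n.+2 := lift ord0 ord0.

(* The position given by voter [i] to each alternative: [0] goes second and the
   others are shifted cyclically by [i] over the remaining positions. *)
Definition rotation_rank (i : 'I_n.+1) : {perm 'I_n.+2} :=
  lift_perm ord0 second (perm (addrI i)).

Definition rotation_profile : profile n.+1 n.+2 := fun i => (rotation_rank i)^-1%g.

Variables (R : realType) (q : R) (q01 : 0 <= q <= 1).

Lemma exp_sw_rotation_profile j :
  exp_sw (bernoulli01 q01) rotation_profile j =
  (\sum_(i < n.+1) order_stat_mean q n.+2 (rotation_rank i j))%:E.
Proof.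
rewrite /exp_sw /sw iid_expect_bernoulli01 bern_expect_sum; congr EFin.
apply: eq_bigr => i _; rewrite /utility /rotation_profile invgK.
rewrite (bern_expect_block q _ (fun t => nth 0 (sort _ t) (rotation_rank i j))) //.
by apply: eq_bern_expect => s _ s01; rewrite nth_sort_bool_seq.
Qed.

Lemma exp_sw_rotation_profile_ord0 :
  exp_sw (bernoulli01 q01) rotation_profile ord0 =
  (n.+1%:R * order_stat_mean q n.+2 1)%:E.
Proof.
rewrite exp_sw_rotation_profile; congr EFin.
under eq_bigr do rewrite lift_perm_id.
by rewrite sumr_const card_ord mulr_natl.
Qed.

Lemma exp_sw_rotation_profile_lift k :
  exp_sw (bernoulli01 q01) rotation_profile (lift ord0 k) =
  (n.+2%:R * q - order_stat_mean q n.+2 1)%:E.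
Proof.
rewrite exp_sw_rotation_profile; congr EFin.
under eq_bigr do rewrite lift_perm_lift permE.
rewrite (reindex_inj (addIr (- k))); under eq_bigr do rewrite subrK.
by rewrite -(sum_order_stat_mean q n.+2) (bigD1_ord second) //= addrC addrK.
Qed.

Lemma rotation_profile_argmax k : q < order_stat_mean q n.+2 1 ->
  (forall k', (exp_sw (bernoulli01 q01) rotation_profile k' <=
               exp_sw (bernoulli01 q01) rotation_profile k)%E) ->
  k = ord0.
Proof.
move=> qT kmax; case: (unliftP ord0 k) => [k' kE|//]; move: (kmax ord0).
rewrite kE exp_sw_rotation_profile_ord0 exp_sw_rotation_profile_lift lee_fin => le_T.
clear kmax kE; have n0 : 0 <= n%:R :> R := ler0n _ n.
by exfalso; move: le_T qT; rewrite !mulrS; nra.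
Qed.

Lemma exp_sw_rotation_profile_ord0_lt delta : 0 < delta <= 1 -> 0 < q ->
  n.+2%:R ^+ 2 * q < delta ->
  (exp_sw (bernoulli01 q01) rotation_profile ord0 <
   delta%:E * exp_sw (bernoulli01 q01) rotation_profile (lift ord0 ord0))%E.
Proof.
move=> /andP[d0 d1] q0 Mq.
rewrite exp_sw_rotation_profile_ord0 exp_sw_rotation_profile_lift -EFinM lte_fin.
have := bern_expect_count_gt1 q01 n.+2.
have := bern_expect_ge0 q01 n.+2 (fun s => ler0n _ (1 < ones s)%N).
rewrite -/(order_stat_mean q n.+2 1); set T := order_stat_mean _ _ _.
set M := n.+2%:R => T0 TM.
have nM : n.+1%:R = M - 1 by rewrite /M (mulrSr 1 n.+1) addrK.
have Mq0 : 0 < M * q by rewrite mulr_gt0 // ltr0n.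
have MT : M * T <= M * (M * q) ^+ 2 by rewrite ler_wpM2l ?ler0n.
have : M ^+ 2 * q * (M * q) < delta * (M * q) by rewrite ltr_pM2r.
rewrite nM; nra.
Qed.

End rotation_profile.

Arguments rotation_profile : clear implicits.

Theorem theorem11 (R : realType) (delta eps : R) :
  (0 < delta <= 1)%R -> (0 < eps <= 1)%R ->
  exists (n m : nat) (sigma : profile n m) (D1 D2 : probability R R),
    (0 < m)%N /\ supported01 D1 /\ supported01 D2 /\
    (tv_dist D1 D2 <= eps%:E)%E /\
    forall j : 'I_m,
      (forall k : 'I_m, (exp_sw D1 sigma k <= exp_sw D1 sigma j)%E) ->
      (exp_sw D2 sigma j < delta%:E * \big[maxe/-oo]_(k < m) exp_sw D2 sigma k)%E.
Proof.
move=> d01 /andP[e0 e1]; have [d0 d1] := andP d01.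
have [q q0 q_eps] : exists2 q : R, 0 < q & 4 * q <= eps.
  by exists (eps / 4); [rewrite divr_gt0 | rewrite mulrC divfK].
have q01 : 0 <= q <= 1 by apply/andP; split; lra.
pose i := Num.truncn (3 / q); pose M : R := i.*2.+3%:R.
have iq3 : 3 <= i.+1%:R * q by rewrite -ler_pdivrMr // ltW // truncnS_gt.
have M2 : 1 <= M ^+ 2 by rewrite expr_ge1 ?ler1n.
pose p := delta * q / (2 * M ^+ 2).
have Mp : M ^+ 2 * p = delta * q / 2.
  by rewrite /p; field; rewrite -natrD pnatr_eq0.
have p0 : 0 < p by rewrite !divr_gt0 ?mulr_gt0 //; nra.
have pq : p <= q by rewrite /p ler_pdivrMr; nra.
have p01 : 0 <= p <= 1 by apply/andP; split; lra.
exists i.*2.+2, i.*2.+3, (rotation_profile i.*2.+1), (bernoulli01 q01), (bernoulli01 p01).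
split=> //; split; first exact: supported01_bernoulli01.
split; first exact: supported01_bernoulli01.
split=> [|j jmax].
  by rewrite (le_trans (tv_dist_bernoulli01 _ _)) // lee_fin ler_norml; lra.
have T_gt_q : q < order_stat_mean q i.*2.+3 1.
  by have := bern_expect_count_gt1_ge q01 iq3; rewrite doubleS -/(order_stat_mean q _ 1); lra.
rewrite (rotation_profile_argmax T_gt_q jmax).
apply: lt_le_trans (exp_sw_rotation_profile_ord0_lt p01 d01 p0 _) _.
  by rewrite -/M Mp; nra.
by apply: lee_wpmul2l; [rewrite lee_fin ltW | exact: le_bigmax].
Qed.
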